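(* Let $n\ge2$ and $0<c\le\frac1{\sqrt n}$. Set $\delta=\frac1n+\frac{\sqrt{(n-1)(c^2-c^4)}}{n(c^2-1)}$. Then $0\le\delta<\frac1n$, and with $B=I-\delta e^{n\times n}$ having columns $b_1,\dots,b_n$ and $\alpha=\frac1{\sqrt{\delta^2n-2\delta+1}}$, the set $\{\alpha b_1,\dots,\alpha b_n,-\alpha b_1,\dots,-\alpha b_n\}$ is a positive basis of $\mathbb R^n$ with cosine measure $c$.
   Context: $e^{n\times n}$ is the $n\times n$ all-ones matrix. A finite set $\mathcal P$ is a positive basis if its positive span $\{\sum\lambda_id_i:\lambda_i\ge0\}$ is $\mathbb R^n$ and no $d\in\mathcal P$ lies in the positive span of $\mathcal P\setminus\{d\}$. The cosine measure of a finite $\mathcal S\subset\mathbb R^n\setminus\{\mathbf 0\}$ is $\min_{\|u\|=1}\max_{d\in\mathcal S}\frac{d^\top u}{\|d\|}$. *)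

From HB Require Import structures.
From mathcomp Require Import all_boot all_order all_algebra.
From mathcomp Require Import reals.
Set Implicit Arguments. Unset Strict Implicit. Unset Printing Implicit Defensive.
Import Order.TTheory GRing.Theory Num.Theory.
Local Open Scope ring_scope.

Section Defs.
Variables (R : realType) (n : nat).

Definition dotv (u v : 'cV[R]_n) : R := (u^T *m v) 0 0.
Definition normv (u : 'cV[R]_n) : R := Num.sqrt (dotv u u).

Definition ones_mx : 'M[R]_n := const_mx 1.

Definition in_pspan (s : seq 'cV[R]_n) (v : 'cV[R]_n) : Prop :=
  exists lam : 'I_(size s) -> R,
    (forall i, 0 <= lam i) /\ v = \sum_(i < size s) lam i *: s`_i.

Definition positive_basis (P : seq 'cV[R]_n) : Prop :=
  (forall v : 'cV[R]_n, in_pspan P v) /\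
  (forall d, d \in P -> ~ in_pspan [seq x <- P | x != d] d).

Definition cos_max (S : seq 'cV[R]_n) (u : 'cV[R]_n) : R :=
  \big[Num.max/(dotv (head 0 S) u / normv (head 0 S))]_(d <- S) (dotv d u / normv d).

Definition has_cosine_measure (S : seq 'cV[R]_n) (c : R) : Prop :=
  S != [::] /\ (forall d, d \in S -> d != 0) /\
  (exists u : 'cV[R]_n, normv u = 1 /\ cos_max S u = c) /\
  (forall u : 'cV[R]_n, normv u = 1 -> c <= cos_max S u).

End Defs.

From HB Require Import structures.
From mathcomp Require Import all_boot all_order all_algebra.
From mathcomp Require Import reals.
From mathcomp Require Import lra ring.
Set Implicit Arguments. Unset Strict Implicit. Unset Printing Implicit Defensive.
Import Order.TTheory GRing.Theory Num.Theory.
Local Open Scope ring_scope.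

(* Write t = 1 - n delta and a_i = alpha (e_i - delta 1) for the scaled columns of
   B. Since B^-1 = I + (delta / t) e, the a_i form a basis with a biorthogonal dual
   basis, and a basis together with its negatives is a positive basis: split
   coefficients into positive and negative parts, and separate a_j from the other
   vectors by its dual vector. The a_i are unit vectors and all make the angle
   alpha t / sqrt n with u0 = (1, ..., 1) / sqrt n. Conversely a unit vector u has a
   coordinate of size at least 1 / sqrt n, while every row of B^-1 has l1-norm 1 / t,
   so |a_i . u| >= alpha t / sqrt n for some i; as -a_i is in the set too, the cosine
   measure is alpha t / sqrt n = t / sqrt (t^2 + n - 1). The given delta is exactly
   the solution of t / sqrt (t^2 + n - 1) = c with 0 < t <= 1. *)

Section EuclideanSpace.
Variables (R : realType) (n : nat).
Implicit Types (u v y d : 'cV[R]_n) (s S : seq 'cV[R]_n).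

Definition sumv u : R := \sum_k u k 0.

Lemma dotvE u v : dotv u v = \sum_k u k 0 * v k 0.
Proof. by rewrite /dotv !mxE; apply: eq_bigr => k _; rewrite mxE. Qed.

Lemma dotvC u v : dotv u v = dotv v u.
Proof. by rewrite !dotvE; apply: eq_bigr => k _; rewrite mulrC. Qed.

Lemma dotvNl u v : dotv (- u) v = - dotv u v.
Proof. by rewrite !dotvE -sumrN; apply: eq_bigr => k _; rewrite mxE mulNr. Qed.

Lemma dotvNr u v : dotv u (- v) = - dotv u v.
Proof. by rewrite dotvC dotvNl dotvC. Qed.

Lemma dotv1r u : dotv u (const_mx 1) = sumv u.
Proof. by rewrite dotvE; apply: eq_bigr => k _; rewrite mxE mulr1. Qed.

Lemma sumv_const a : sumv (const_mx a) = a *+ n.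
Proof.
by rewrite /sumv (eq_bigr (fun=> a)) ?sumr_const ?card_ord // => k _; rewrite mxE.
Qed.

Lemma normv_const_unit :
  (0 < n)%N -> normv (const_mx (Num.sqrt n%:R)^-1 : 'cV[R]_n) = 1.
Proof.
move=> n_gt0; rewrite /normv dotvE (eq_bigr (fun=> (Num.sqrt n%:R)^-2)) => [|k _].
  rewrite sumr_const card_ord -[_ *+ n]mulr_natr sqr_sqrtr ?ler0n //.
  by rewrite mulVf ?sqrtr1 // pnatr_eq0 -lt0n.
by rewrite !mxE -expr2 exprVn.
Qed.

Lemma dotv_sumr (I : Type) (r : seq I) (lam : I -> R) (F : I -> 'cV[R]_n) u :
  dotv u (\sum_(i <- r) lam i *: F i) = \sum_(i <- r) lam i * dotv u (F i).
Proof.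
rewrite /dotv mulmx_sumr summxE; apply: eq_bigr => i _.
by rewrite -scalemxAr mxE.
Qed.

Lemma normv0 : normv (0 : 'cV[R]_n) = 0.
Proof. by rewrite /normv dotvE big1 ?sqrtr0 // => k _; rewrite mxE mul0r. Qed.

Lemma normvN u : normv (- u) = normv u.
Proof. by rewrite /normv dotvNl dotvNr opprK. Qed.

Lemma normv_le_sup u m : 0 <= m -> (forall k, `|u k 0| <= m) ->
  normv u <= Num.sqrt n%:R * m.
Proof.
move=> m_ge0 u_le; rewrite -(ger0_norm m_ge0) -sqrtr_sqr -sqrtrM ?ler0n //.
rewrite /normv dotvE; apply: ler_wsqrtr.
have sq_le k : u k 0 * u k 0 <= m ^+ 2.
  by rewrite (le_trans (ler_norm _)) // normrM expr2 ler_pM.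
apply: le_trans (ler_sum _ (fun k _ => sq_le k)) _.
by rewrite sumr_const card_ord mulr_natl.
Qed.

Lemma not_in_pspan s d y :
  0 < dotv y d -> (forall x, x \in s -> dotv y x <= 0) -> ~ in_pspan s d.
Proof.
move=> yd ys [lam [lam_ge0 d_eq]]; move: yd; rewrite d_eq dotv_sumr ltNge.
by rewrite sumr_le0 // => i _; rewrite mulr_ge0_le0 // ys // mem_nth.
Qed.

Lemma cos_max_ge S u d : d \in S -> dotv d u / normv d <= cos_max S u.
Proof. by move=> dS; rewrite /cos_max (le_bigmax_seq _ _ _ _ dS). Qed.

Lemma cos_max_le S u M : S != [::] ->
  (forall d, d \in S -> dotv d u / normv d <= M) -> cos_max S u <= M.
Proof.
move=> S_neq0 S_le; rewrite /cos_max big_seq; apply: bigmax_le => [|d /S_le //].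
by apply: S_le; case: S S_neq0 => //= d S _; rewrite mem_head.
Qed.

Lemma has_cosine_measure_unit S c u0 :
  (forall d, d \in S -> normv d = 1) -> normv u0 = 1 ->
  (exists2 d, d \in S & dotv d u0 = c) -> (forall d, d \in S -> dotv d u0 <= c) ->
  (forall u, normv u = 1 -> forall M, (forall d, d \in S -> dotv d u <= M) -> c <= M) ->
  has_cosine_measure S c.
Proof.
move=> S_unit u0_unit [d0 d0S d0u0] u0_le c_le.
have cosE u d : d \in S -> dotv d u / normv d = dotv d u.
  by move=> dS; rewrite S_unit // divr1.
have S_neq0 : S != [::] by case: S d0S {S_unit u0_le c_le cosE}.
split=> //; split; [|split].
- move=> d dS; apply/eqP => d_eq0; have := S_unit d dS.
  by rewrite d_eq0 normv0 => /eqP; rewrite eq_sym oner_eq0.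
- exists u0; split=> //; apply: le_anti; apply/andP; split.
    by apply: cos_max_le => // d dS; rewrite cosE // u0_le.
  by rewrite -d0u0 -(cosE u0 d0 d0S) cos_max_ge.
- move=> u u_unit; apply: (c_le u u_unit) => d dS.
  by rewrite -cosE // cos_max_ge.
Qed.

End EuclideanSpace.

Section SignedFamily.
Variables (R : realType) (n m : nat) (f : 'I_m -> 'cV[R]_n).

Definition signed_family : seq 'cV[R]_n :=
  [seq f i | i <- enum 'I_m] ++ [seq - f i | i <- enum 'I_m].

Lemma signed_familyP d : d \in signed_family -> exists i, d = f i \/ d = - f i.
Proof.
by rewrite mem_cat => /orP [] /mapP [i _ ->]; exists i; [left | right].
Qed.

Lemma mem_signed_family i : f i \in signed_family /\ - f i \in signed_family.
Proof.
split; rewrite mem_cat; apply/orP; [left | right].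
  by apply/mapP; exists i; rewrite ?mem_enum.
by apply/mapP; exists i; rewrite ?mem_enum.
Qed.

Lemma signed_family_pspan v (x : 'I_m -> R) :
  v = \sum_i x i *: f i -> in_pspan signed_family v.
Proof.
move=> v_eq.
have pos_neg (a : R) : Num.max a 0 - Num.max (- a) 0 = a.
  have [a_ge0 | a_lt0] := leP 0 a.
    by rewrite (max_r (_ : - a <= 0)) ?subr0 // oppr_le0.
  by rewrite (max_l (_ : 0 <= - a)) ?opprK ?add0r // oppr_ge0 ltW.
have nth_enum (g : 'I_m -> 'cV[R]_n) (i : 'I_m) : [seq g j | j <- enum 'I_m]`_i = g i.
  by rewrite (nth_map i) ?size_enum_ord // nth_ord_enum.
pose xn k := oapp x 0 (insub k).
pose lam k := if (k < m)%N then Num.max (xn k) 0 else Num.max (- xn (k - m)%N) 0.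
exists (fun k => lam k); split.
  by move=> k; rewrite /lam; case: ifP => _; rewrite le_max lexx orbT.
rewrite -(big_mkord xpredT (fun k => lam k *: signed_family`_k)).
have size_sf : size signed_family = (m + m)%N.
  by rewrite size_cat size_map size_enum_ord size_map size_enum_ord.
rewrite size_sf big_mkord big_split_ord /= -big_split v_eq.
apply: eq_bigr => i _; rewrite !nth_cat size_map size_enum_ord /= ltn_ord.
rewrite ltnNge leq_addr addKn /= !nth_enum /lam /= ltn_ord ltnNge leq_addr addKn /=.
by rewrite /xn valK /= scalerN -scalerBl pos_neg.
Qed.

Lemma signed_family_pindep (y : 'I_m -> 'cV[R]_n) :
  (forall j k, dotv (y j) (f k) = (j == k)%:R) ->
  forall d, d \in signed_family -> ~ in_pspan [seq x <- signed_family | x != d] d.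
Proof.
move=> yf d /signed_familyP [j [->|->]].
- apply: (@not_in_pspan _ _ _ _ (y j)); first by rewrite yf eqxx ltr01.
  move=> x; rewrite mem_filter => /andP [x_neq /signed_familyP [k [x_eq|x_eq]]].
    have jk : j != k by apply: contra_neq x_neq => ->.
    by rewrite x_eq yf (negbTE jk).
  by rewrite x_eq dotvNr yf oppr_le0.
- apply: (@not_in_pspan _ _ _ _ (- y j)).
    by rewrite dotvNl dotvNr opprK yf eqxx ltr01.
  move=> x; rewrite mem_filter => /andP [x_neq /signed_familyP [k [x_eq|x_eq]]].
    by rewrite x_eq dotvNl yf oppr_le0.
  have jk : j != k by apply: contra_neq x_neq => ->.
  by rewrite x_eq dotvNl dotvNr opprK yf (negbTE jk).
Qed.

Lemma signed_family_positive_basis (y : 'I_m -> 'cV[R]_n) :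
  (forall v, exists x : 'I_m -> R, v = \sum_i x i *: f i) ->
  (forall j k, dotv (y j) (f k) = (j == k)%:R) ->
  positive_basis signed_family.
Proof.
move=> f_span yf; split; last exact: signed_family_pindep yf.
by move=> v; have [x] := f_span v; apply: signed_family_pspan.
Qed.

End SignedFamily.

Section Frame.
Variables (R : realType) (n : nat) (delta : R).

Definition frame_alpha : R := 1 / Num.sqrt (delta ^+ 2 * n%:R - 2 * delta + 1).

Definition frame_vec (i : 'I_n) : 'cV[R]_n :=
  frame_alpha *: col i (1%:M - delta *: ones_mx R n).

Definition frame_cos : R := frame_alpha * (1 - n%:R * delta) / Num.sqrt n%:R.

Local Notation alpha := frame_alpha.
Local Notation t := (1 - n%:R * delta).

Lemma frame_vecE i k : frame_vec i k 0 = alpha * ((k == i)%:R - delta).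
Proof. by rewrite !mxE mulr1. Qed.

Lemma frame_vecC i k : frame_vec i k 0 = frame_vec k i 0.
Proof. by rewrite !frame_vecE eq_sym. Qed.

Lemma dotv_frame_vec i u : dotv (frame_vec i) u = alpha * (u i 0 - delta * sumv u).
Proof.
rewrite dotvE /sumv (bigD1 i) //= [in RHS](bigD1 i) //=.
under eq_bigr => k k_neq_i do rewrite frame_vecE (negbTE k_neq_i).
by rewrite -mulr_sumr frame_vecE eqxx /=; ring.
Qed.

Lemma sumv_frame_vec i : sumv (frame_vec i) = alpha * t.
Proof. by rewrite -dotv1r dotv_frame_vec sumv_const mxE; ring. Qed.

Lemma frame_quadE : n%:R * (delta ^+ 2 * n%:R - 2 * delta + 1) = t ^+ 2 + n%:R - 1.
Proof. by ring. Qed.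

(* The inverse of [u |-> (dotv (frame_vec k) u)_k], i.e. of alpha B, since
   B^-1 = I + (delta / t) e. *)
Definition frame_solve (v : 'cV[R]_n) : 'cV[R]_n :=
  \col_k ((v k 0 + delta / t * sumv v) / alpha).

Hypotheses (n_gt0 : (0 < n)%N) (delta_ge0 : 0 <= delta).
Hypothesis n_delta_lt1 : n%:R * delta < 1.

Lemma frame_t_gt0 : 0 < t.
Proof. by rewrite subr_gt0. Qed.

Lemma frame_quad_gt0 : 0 < delta ^+ 2 * n%:R - 2 * delta + 1.
Proof.
have n_ge1 : 1 <= n%:R :> R by rewrite ler1n.
have t2_gt0 : 0 < t ^+ 2 by rewrite exprn_gt0 // frame_t_gt0.
by rewrite -(pmulr_rgt0 _ (_ : 0 < n%:R :> R)) ?ltr0n // frame_quadE; lra.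
Qed.

Lemma frame_alpha_gt0 : 0 < alpha.
Proof. by rewrite divr_gt0 // sqrtr_gt0 frame_quad_gt0. Qed.

Lemma frame_alpha_sqr : alpha ^+ 2 * (delta ^+ 2 * n%:R - 2 * delta + 1) = 1.
Proof.
rewrite expr_div_n expr1n sqr_sqrtr ?ltW ?frame_quad_gt0 //.
by rewrite mul1r mulVf // gt_eqF // frame_quad_gt0.
Qed.

Lemma normv_frame_vec i : normv (frame_vec i) = 1.
Proof.
rewrite /normv dotv_frame_vec sumv_frame_vec frame_vecE eqxx /=.
have -> : alpha * (alpha * (1 - delta) - delta * (alpha * t)) =
          alpha ^+ 2 * (delta ^+ 2 * n%:R - 2 * delta + 1) by ring.
by rewrite frame_alpha_sqr sqrtr1.
Qed.

Lemma frame_solve_dotv u : frame_solve (\col_k dotv (frame_vec k) u) = u.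
Proof.
have sum_dotv : sumv (\col_k dotv (frame_vec k) u) = alpha * t * sumv u.
  rewrite /sumv; under eq_bigr do rewrite mxE dotv_frame_vec.
  by rewrite -mulr_sumr sumrB sumr_const card_ord -/(sumv u); ring.
apply/matrixP => k l; rewrite ord1 !mxE sum_dotv dotv_frame_vec.
by field; rewrite !gt_eqF ?frame_alpha_gt0 ?frame_t_gt0.
Qed.

Lemma dotv_frame_solve v k : dotv (frame_vec k) (frame_solve v) = v k 0.
Proof.
have sum_solve : sumv (frame_solve v) = sumv v / (alpha * t).
  rewrite /sumv; under eq_bigr do rewrite mxE.
  rewrite -mulr_suml big_split sumr_const card_ord /= -/(sumv v).
  by field; rewrite !gt_eqF ?frame_alpha_gt0 ?frame_t_gt0.
rewrite dotv_frame_vec sum_solve mxE.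
by field; rewrite !gt_eqF ?frame_alpha_gt0 ?frame_t_gt0.
Qed.

Lemma frame_spans v : v = \sum_k frame_solve v k 0 *: frame_vec k.
Proof.
apply/matrixP => j l; rewrite ord1 summxE -[LHS](dotv_frame_solve v j) dotvE.
by apply: eq_bigr => k _; rewrite [RHS]mxE (frame_vecC k j) mulrC.
Qed.

Lemma normr_frame_solve_le (v : 'cV[R]_n) M k :
  (forall j, `|v j 0| <= M) -> `|frame_solve v k 0| <= M / (alpha * t).
Proof.
move=> v_le.
have sumv_le : `|sumv v| <= n%:R * M.
  apply: le_trans (ler_norm_sum _ _ _) _.
  by rewrite (le_trans (ler_sum _ (fun j _ => v_le j))) // sumr_const card_ord mulr_natl.
have dt_ge0 : 0 <= delta / t by rewrite divr_ge0 // ltW // frame_t_gt0.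
have num_le : `|v k 0 + delta / t * sumv v| <= M / t.
  apply: le_trans (ler_normD _ _) _; rewrite normrM (ger0_norm dt_ge0).
  have -> : M / t = M + delta / t * (n%:R * M).
    by field; rewrite gt_eqF ?frame_t_gt0.
  by rewrite lerD // ler_wpM2l.
have -> : M / (alpha * t) = M / t / alpha.
  by field; rewrite !gt_eqF ?frame_alpha_gt0 ?frame_t_gt0.
rewrite mxE normrM normfV (gtr0_norm frame_alpha_gt0).
by rewrite ler_pM2r ?invr_gt0 ?frame_alpha_gt0.
Qed.

Lemma frame_cos_le (u : 'cV[R]_n) M : normv u = 1 ->
  (forall i, `|dotv (frame_vec i) u| <= M) -> frame_cos <= M.
Proof.
move=> u_unit dotv_le.
have M_ge0 : 0 <= M := le_trans (normr_ge0 _) (dotv_le (Ordinal n_gt0)).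
have at_gt0 : 0 < alpha * t by rewrite mulr_gt0 ?frame_alpha_gt0 ?frame_t_gt0.
have u_le k : `|u k 0| <= M / (alpha * t).
  by rewrite -(frame_solve_dotv u) normr_frame_solve_le // => j; rewrite mxE.
have := normv_le_sup (divr_ge0 M_ge0 (ltW at_gt0)) u_le.
rewrite u_unit /frame_cos ler_pdivrMr ?sqrtr_gt0 ?ltr0n // => sqrt_n_ge.
have := ler_wpM2l (ltW at_gt0) sqrt_n_ge.
have -> : alpha * t * (Num.sqrt n%:R * (M / (alpha * t))) = M * Num.sqrt n%:R.
  by field; rewrite !gt_eqF ?frame_alpha_gt0 ?frame_t_gt0.
by rewrite mulr1.
Qed.

Lemma dotv_frame_vec_const i :
  dotv (frame_vec i) (const_mx (Num.sqrt n%:R)^-1) = frame_cos.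
Proof. by rewrite dotv_frame_vec sumv_const mxE /frame_cos -mulr_natl; ring. Qed.

Lemma frame_positive_basis : positive_basis (signed_family frame_vec).
Proof.
apply: (signed_family_positive_basis (y := fun j => frame_solve (delta_mx j 0))).
  by move=> v; exists (fun k => frame_solve v k 0); exact: frame_spans.
by move=> j k; rewrite dotvC dotv_frame_solve mxE andbT eq_sym.
Qed.

Lemma frame_cosine_measure : has_cosine_measure (signed_family frame_vec) frame_cos.
Proof.
have cos_gt0 : 0 < frame_cos.
  apply: divr_gt0; first exact: mulr_gt0 frame_alpha_gt0 frame_t_gt0.
  by rewrite sqrtr_gt0 ltr0n.
apply: (has_cosine_measure_unit (u0 := const_mx (Num.sqrt n%:R)^-1 : 'cV[R]_n)).
- by move=> d /signed_familyP [i [->|->]]; rewrite ?normvN normv_frame_vec.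
- exact: normv_const_unit.
- pose i0 := Ordinal n_gt0.
  exists (frame_vec i0); last exact: dotv_frame_vec_const.
  by case: (mem_signed_family frame_vec i0).
- move=> d /signed_familyP [i [->|->]]; rewrite ?dotvNl dotv_frame_vec_const //.
  by have := cos_gt0; lra.
- move=> u u_unit M S_le; apply: (frame_cos_le u_unit) => i; rewrite ler_norml.
  have [fS NfS] := mem_signed_family frame_vec i.
  by rewrite lerNl -dotvNl !S_le.
Qed.

Lemma frame_cosE : frame_cos = t / Num.sqrt (t ^+ 2 + n%:R - 1).
Proof.
rewrite /frame_cos /frame_alpha -frame_quadE sqrtrM ?ler0n //.
have quad_gt0 := frame_quad_gt0.
by field; rewrite !gt_eqF ?sqrtr_gt0 ?ltr0n.
Qed.

End Frame.

Lemma frame_delta_of_cos (R : realType) (n : nat) (c : R) :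
  (2 <= n)%N -> 0 < c -> c <= 1 / Num.sqrt n%:R ->
  let delta := 1 / n%:R +
      Num.sqrt ((n%:R - 1) * (c ^+ 2 - c ^+ 4)) / (n%:R * (c ^+ 2 - 1)) in
  [/\ 0 <= delta, n%:R * delta < 1 & frame_cos n delta = c].
Proof.
move=> n_ge2 c_gt0 c_le delta.
have n_gt0 : (0 < n)%N by apply: leq_trans n_ge2.
have n_ge2R : 2 <= n%:R :> R by rewrite (ler_nat R 2 n).
have c2_gt0 : 0 < c ^+ 2 by rewrite exprn_gt0.
have c2n_le1 : c ^+ 2 * n%:R <= 1.
  have sqrt_n_gt0 : 0 < Num.sqrt n%:R :> R by rewrite sqrtr_gt0 ltr0n.
  have c_sqrt_n_le1 : c * Num.sqrt n%:R <= 1 by rewrite -ler_pdivlMr.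
  by rewrite -[n%:R](sqr_sqrtr (ler0n _ n)) -exprMn expr_le1 // mulr_ge0 // ltW.
have one_sub_c2_gt0 : 0 < 1 - c ^+ 2 by nra.
pose r := Num.sqrt ((n%:R - 1) * (c ^+ 2 - c ^+ 4)).
have r2 : r ^+ 2 = (n%:R - 1) * (c ^+ 2 - c ^+ 4).
  by rewrite sqr_sqrtr // mulr_ge0 //; [lra | nra].
have r_gt0 : 0 < r by rewrite sqrtr_gt0 mulr_gt0 //; [lra | nra].
set t := 1 - n%:R * delta.
have t_def : t = r / (1 - c ^+ 2).
  rewrite /t /delta -/r; field.
  by rewrite gt_eqF // -opprB oppr_eq0 gt_eqF // pnatr_eq0 -lt0n.
have t_gt0 : 0 < t by rewrite t_def divr_gt0.
have t2_eq : t ^+ 2 * (1 - c ^+ 2) = (n%:R - 1) * c ^+ 2.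
  by rewrite t_def expr_div_n r2; field; rewrite gt_eqF.
have t_le1 : t <= 1.
  have t2_le1 : t ^+ 2 <= 1 by rewrite -(ler_pM2r one_sub_c2_gt0) mul1r t2_eq; lra.
  by move: t2_le1; rewrite expr_le1 // ltW.
have quad_gt0 : 0 < t ^+ 2 + n%:R - 1 by have := exprn_gt0 2 t_gt0; lra.
have n_delta_lt1 : n%:R * delta < 1 by rewrite /t in t_gt0; lra.
have delta_ge0 : 0 <= delta.
  by rewrite -(pmulr_rge0 _ (_ : 0 < n%:R :> R)) ?ltr0n //; rewrite /t in t_le1; lra.
split=> //.
rewrite frame_cosE // -/t.
apply/eqP; rewrite -(eqrXn2 (isT : 0 < 2)%N) ?divr_ge0 ?sqrtr_ge0 ?ltW //.
rewrite expr_div_n sqr_sqrtr ?ltW // -[c ^+ 2](mulfK (lt0r_neq0 quad_gt0)).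
by apply/eqP; congr (_ / _); nra.
Qed.

Theorem corollary3 (R : realType) (n : nat) (c : R) :
  (2 <= n)%N -> 0 < c -> c <= 1 / Num.sqrt (n%:R) ->
  let delta : R := 1 / n%:R +
      Num.sqrt ((n%:R - 1) * (c ^+ 2 - c ^+ 4)) / (n%:R * (c ^+ 2 - 1)) in
  let B : 'M[R]_n := 1%:M - delta *: ones_mx R n in
  let alpha : R := 1 / Num.sqrt (delta ^+ 2 * n%:R - 2 * delta + 1) in
  let S : seq 'cV[R]_n :=
      [seq alpha *: col i B | i <- enum 'I_n] ++
      [seq - (alpha *: col i B) | i <- enum 'I_n] in
  (0 <= delta /\ delta < 1 / n%:R) /\
  positive_basis S /\ has_cosine_measure S c.
Proof.
move=> n_ge2 c_gt0 c_le delta B alpha S.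
have n_gt0 : (0 < n)%N by apply: leq_trans n_ge2.
have [delta_ge0 n_delta_lt1 cos_eq] := frame_delta_of_cos n_ge2 c_gt0 c_le.
split; first by rewrite ltr_pdivlMr ?ltr0n // mulrC.
split; first exact: frame_positive_basis.
by rewrite -cos_eq; apply: frame_cosine_measure.
Qed.
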